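(* Let $\mathcal{Q}$ be a parabolic subset of $\mathcal{R}$, $\mathrm{s}$ an involution of $\mathcal{R}$, and $C$ a $V$-fit Weyl chamber for $(\mathcal{Q},\mathrm{s})$. Set $\Phi_C=\mathcal{B}(C)\cap\mathcal{Q}^n$ and $\Phi_C^{\mathrm{s},+}=\{\alpha\in\Phi_C\mid\mathrm{s}(\alpha)\in\mathcal{R}^+(C)\}$. Then $\mathcal{Q}_{\Phi_C^{\mathrm{s},+}}$ is the largest closed subset of $\mathcal{R}$ which contains $\mathcal{Q}$ and is contained in $\mathcal{Q}\cup\mathrm{s}(\mathcal{Q})$. Moreover the following are equivalent: (a) $(\mathcal{Q},\mathrm{s})$ is Levi-nondegenerate; (b) $\mathrm{s}(\Phi_C)\subseteq\mathcal{R}^+(C)$; (c) $\mathrm{s}(\Phi_C)\subseteq\mathcal{Q}^n$.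
   Context: $\mathcal{R}$ is a reduced root system in a Euclidean space $V$. Closed subset: $\alpha,\beta\in\mathcal{Q}$, $\alpha+\beta\in\mathcal{R}\Rightarrow\alpha+\beta\in\mathcal{Q}$; parabolic: closed with $\mathcal{Q}\cup(-\mathcal{Q})=\mathcal{R}$. $\mathcal{Q}^r=\{\alpha\in\mathcal{Q}\mid-\alpha\in\mathcal{Q}\}$, $\mathcal{Q}^n=\{\alpha\in\mathcal{Q}\mid-\alpha\notin\mathcal{Q}\}$. For a Weyl chamber $C$: $\mathcal{R}^\pm(C)$ positive/negative roots, $\mathcal{B}(C)$ simple roots, $\mathrm{supp}_C(\alpha)$ the set of simple roots with nonzero coefficient in $\alpha$. $C$ is admissible for $\mathcal{Q}$ if $\mathcal{R}^+(C)\subseteq\mathcal{Q}$. For $\Phi\subseteq\mathcal{B}(C)$, $\mathcal{Q}_\Phi=\mathcal{R}^+(C)\cup\{\alpha\in\mathcal{R}^-(C)\mid\mathrm{supp}_C(\alpha)\cap\Phi=\emptyset\}$. An involution of $\mathcal{R}$ is a linear isometric involution $\mathrm{s}$ of $V$ with $\mathrm{s}(\mathcal{R})=\mathcal{R}$; a root $\alpha$ is real if $\mathrm{s}(\alpha)=\alpha$, imaginary if $\mathrm{s}(\alpha)=-\alpha$, complex otherwise. An admissible chamber $C$ is $V$-fit for $(\mathcal{Q},\mathrm{s})$ if $\mathrm{s}(\alpha)\in\mathcal{R}^-(C)$ for every complex $\alpha\in\mathcal{B}(C)\setminus\Phi_C$. The pair $(\mathcal{Q},\mathrm{s})$ is Levi-nondegenerate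 if there is no parabolic $\mathcal{Q}'$ with $\mathcal{Q}\subsetneq\mathcal{Q}'\subseteq\mathcal{Q}\cup\mathrm{s}(\mathcal{Q})$. *)

From HB Require Import structures.
From mathcomp Require Import all_boot all_order all_algebra.
Set Implicit Arguments. Unset Strict Implicit. Unset Printing Implicit Defensive.
Import Order.TTheory GRing.Theory Num.Theory.
Local Open Scope ring_scope.

Section RootSystems.
Variables (R : realFieldType) (n : nat).
Notation V := 'rV[R]_n.

Definition dot (u v : V) : R := (u *m v^T) 0 0.

Definition refl (a x : V) : V := x - ((2 * dot x a) / dot a a) *: a.

Definition reduced_root_system (Rs : seq V) : Prop :=
  uniq Rs /\ 0 \notin Rs /\
  [/\ (forall v : V, exists k : V -> R, v = \sum_(a <- Rs) k a *: a),
      (forall a b, a \in Rs -> b \in Rs -> refl a b \in Rs),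
      (forall a b, a \in Rs -> b \in Rs ->
          exists z : int, (2 * dot b a) / dot a a = z%:~R) &
      (forall a (c : R), a \in Rs -> c *: a \in Rs -> c = 1 \/ c = -1)].

Definition subsetV (A B : V -> Prop) := forall x, A x -> B x.

(* Weyl chamber: a connected component of V minus the root hyperplanes, i.e.
   the set of vectors having the same (nonzero) signs on all roots as some
   regular vector c. *)
Definition weyl_chamber (Rs : seq V) (C : V -> Prop) : Prop :=
  exists c : V, (forall a, a \in Rs -> dot a c != 0) /\
    forall x, C x <-> (forall a, a \in Rs -> dot a x != 0 /\
                                     ((0 < dot a x) = (0 < dot a c))).

Definition pos_roots (Rs : seq V) (C : V -> Prop) (a : V) : Prop :=
  a \in Rs /\ forall x, C x -> 0 < dot a x.
Definition neg_roots (Rs : seq V) (C : V -> Prop) (a : V) : Prop :=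
  a \in Rs /\ forall x, C x -> dot a x < 0.

Definition simple_roots (Rs : seq V) (C : V -> Prop) (a : V) : Prop :=
  pos_roots Rs C a /\
  ~ (exists b c, pos_roots Rs C b /\ pos_roots Rs C c /\ a = b + c).

Definition supp (Rs : seq V) (C : V -> Prop) (a b : V) : Prop :=
  simple_roots Rs C b /\
  exists k : V -> R,
    (forall g, ~ simple_roots Rs C g -> k g = 0) /\
    a = \sum_(g <- Rs) k g *: g /\ k b != 0.

Definition closed_subset (Rs : seq V) (Q : V -> Prop) : Prop :=
  (forall a, Q a -> a \in Rs) /\
  (forall a b, Q a -> Q b -> a + b \in Rs -> Q (a + b)).

Definition parabolic (Rs : seq V) (Q : V -> Prop) : Prop :=
  closed_subset Rs Q /\ (forall a, a \in Rs -> Q a \/ Q (- a)).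

Definition Qr (Q : V -> Prop) (a : V) : Prop := Q a /\ Q (- a).
Definition Qn (Q : V -> Prop) (a : V) : Prop := Q a /\ ~ Q (- a).

Definition admissible (Rs : seq V) (Q : V -> Prop) (C : V -> Prop) : Prop :=
  subsetV (pos_roots Rs C) Q.

Definition QPhi (Rs : seq V) (C : V -> Prop) (Phi : V -> Prop) (a : V) : Prop :=
  pos_roots Rs C a \/
  (neg_roots Rs C a /\ forall b, supp Rs C a b -> ~ Phi b).

Definition act (S : 'M[R]_n) (x : V) : V := x *m S.

Definition root_involution (Rs : seq V) (S : 'M[R]_n) : Prop :=
  [/\ S *m S = 1%:M,
      (forall x y : V, dot (act S x) (act S y) = dot x y),
      (forall a, a \in Rs -> act S a \in Rs) &
      (forall b, b \in Rs -> exists2 a, a \in Rs & b = act S a)].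

Definition complex_root (Rs : seq V) (S : 'M[R]_n) (a : V) : Prop :=
  a \in Rs /\ act S a <> a /\ act S a <> - a.

Definition PhiC (Rs : seq V) (Q : V -> Prop) (C : V -> Prop) (a : V) : Prop :=
  simple_roots Rs C a /\ Qn Q a.

Definition V_fit (Rs : seq V) (Q : V -> Prop) (S : 'M[R]_n) (C : V -> Prop) : Prop :=
  admissible Rs Q C /\
  forall a, simple_roots Rs C a -> ~ PhiC Rs Q C a -> complex_root Rs S a ->
    neg_roots Rs C (act S a).

Definition img (S : 'M[R]_n) (Q : V -> Prop) (b : V) : Prop :=
  exists a, Q a /\ b = act S a.

Definition levi_nondegenerate (Rs : seq V) (Q : V -> Prop) (S : 'M[R]_n) : Prop :=
  ~ exists Q' : V -> Prop,
      [/\ parabolic Rs Q', subsetV Q Q', (exists a, Q' a /\ ~ Q a) &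
          subsetV Q' (fun a => Q a \/ img S Q a)].

End RootSystems.

(* Fix a regular vector [c] of [C] and use coordinates in the basis of simple
   roots.  A closed set containing the positive roots contains a negative root
   [b] iff it contains [-g] for every simple root [g] in the support of [b]
   (peel simple roots off [-b] one at a time); in particular [Q \subset Q_Phi]
   whenever [Phi \subset Q^n].
   The key fact is that [- s g] is not in [Q] when [g] is in [Phi_C] and [s g]
   is positive: otherwise every simple root [h] in the support of [s g] lies in
   [Q^r], so by fitness [s h] has a nonpositive coordinate on [g], and expanding
   [g = s (s g)] gives [1 <= 0].  Hence a closed set between [Q] and
   [Q \cup s(Q)] misses [-g] for [g] in [Phi_C^{s,+}], i.e. lies in
   [Q_{Phi_C^{s,+}}]; conversely the same coordinate count shows that [s] maps
   the negative roots of [Q_{Phi_C^{s,+}}] into [Q].  As [Q_{Phi_C^{s,+}}] is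
   parabolic, and is [Q] itself exactly when [Phi_C^{s,+} = Phi_C], conditions
   (a), (b) and (c) are equivalent. *)

From mathcomp Require Import all_boot all_order all_algebra.
From mathcomp Require Import lra zify.
From Stdlib Require Import Classical ClassicalEpsilon.
From Stdlib Require Import FunctionalExtensionality PropExtensionality.
Set Implicit Arguments. Unset Strict Implicit. Unset Printing Implicit Defensive.
Import Order.TTheory GRing.Theory Num.Theory.
Local Open Scope ring_scope.

Section Dot.
Variables (R : realFieldType) (n : nat).
Implicit Types u v w : 'rV[R]_n.

Lemma dotE u v : dot u v = \sum_(i < n) u 0 i * v 0 i.
Proof. by rewrite /dot mxE; apply: eq_bigr => i _; rewrite mxE. Qed.

Lemma dotC u v : dot u v = dot v u.
Proof. by rewrite !dotE; apply: eq_bigr => i _; rewrite mulrC. Qed.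

Lemma dotDl u v w : dot (u + v) w = dot u w + dot v w.
Proof. by rewrite !dotE -big_split; apply: eq_bigr => i _; rewrite mxE mulrDl. Qed.

Lemma dotZl k u w : dot (k *: u) w = k * dot u w.
Proof. by rewrite !dotE mulr_sumr; apply: eq_bigr => i _; rewrite mxE mulrA. Qed.

Lemma dotNl u w : dot (- u) w = - dot u w.
Proof. by rewrite -scaleN1r dotZl mulN1r. Qed.

Lemma dotBl u v w : dot (u - v) w = dot u w - dot v w.
Proof. by rewrite dotDl dotNl. Qed.

Lemma dotZr k u w : dot w (k *: u) = k * dot w u.
Proof. by rewrite dotC dotZl dotC. Qed.

Lemma dotBr u v w : dot w (u - v) = dot w u - dot w v.
Proof. by rewrite dotC dotBl !(dotC w). Qed.

Lemma dot0l w : dot 0 w = 0.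
Proof. by rewrite -(scale0r 0) dotZl mul0r. Qed.

Lemma dot_suml I (s : seq I) (F : I -> 'rV[R]_n) w :
  dot (\sum_(i <- s) F i) w = \sum_(i <- s) dot (F i) w.
Proof.
elim: s => [|x s IH]; first by rewrite !big_nil dot0l.
by rewrite !big_cons dotDl IH.
Qed.

Lemma dot_sumr I (s : seq I) (F : I -> 'rV[R]_n) w :
  dot w (\sum_(i <- s) F i) = \sum_(i <- s) dot w (F i).
Proof. by rewrite dotC dot_suml; apply: eq_bigr => i _; rewrite dotC. Qed.

Lemma dot_ge0 u : 0 <= dot u u.
Proof. by rewrite dotE; apply: sumr_ge0 => i _; rewrite -expr2 sqr_ge0. Qed.

Lemma dot_eq0 u : (dot u u == 0) = (u == 0).
Proof.
apply/idP/eqP => [|->]; last by rewrite dot0l.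
rewrite dotE psumr_eq0 => [/allP Hu|i _]; last by rewrite -expr2 sqr_ge0.
apply/rowP => i; apply/eqP; rewrite mxE.
by have := Hu i (mem_index_enum _); rewrite /= mulf_eq0 orbb.
Qed.

End Dot.

Section RootSystem.
Variables (R : realFieldType) (n : nat) (Rs : seq 'rV[R]_n).
Hypothesis HRs : reduced_root_system Rs.

Lemma dot_root_gt0 a : a \in Rs -> 0 < dot a a.
Proof.
case: HRs => _ [Rs0 _] Ha; rewrite lt_def dot_eq0 dot_ge0 andbT.
by apply: contraNneq Rs0 => <-.
Qed.

Lemma root_opp a : a \in Rs -> - a \in Rs.
Proof.
case: HRs => _ [_ [_ Hrefl _ _]] Ha.
have := Hrefl a a Ha Ha; rewrite /refl mulfK ?gt_eqF ?dot_root_gt0 //.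
by rewrite scaler_nat mulr2n opprD addrA subrr sub0r.
Qed.

(* Both Cartan integers of [a, b] are positive; if both were at least 2 then
   [|a - b|^2 <= 0], so one of them is 1 and a reflection yields [a - b]. *)
Lemma root_sub a b : a \in Rs -> b \in Rs -> 0 < dot a b -> a != b -> a - b \in Rs.
Proof.
move=> Ha Hb Hab Hne; case: HRs => _ [_ [_ Hrefl Hint _]].
have Haa := dot_root_gt0 Ha; have Hbb := dot_root_gt0 Hb.
have Hba : dot b a = dot a b by rewrite dotC.
have [z1 Hz1] := Hint b a Hb Ha; have [z2 Hz2] := Hint a b Ha Hb.
have z1_gt0 : (0 : R) < z1%:~R by rewrite -Hz1 divr_gt0 // mulr_gt0.
have z2_gt0 : (0 : R) < z2%:~R by rewrite -Hz2 divr_gt0 // Hba mulr_gt0.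
have [z1_1|z1_ge2] := eqVneq z1 1.
  by have := Hrefl b a Hb Ha; rewrite /refl Hz1 z1_1 scale1r.
have [z2_1|z2_ge2] := eqVneq z2 1.
  by have := root_opp (Hrefl a b Ha Hb); rewrite /refl Hz2 z2_1 scale1r opprB.
have {}z1_ge2 : (2 : R) <= z1%:~R.
  have : (2 <= z1)%R by rewrite ltr0z in z1_gt0; lia.
  by rewrite -(ler_int R).
have {}z2_ge2 : (2 : R) <= z2%:~R.
  have : (2 <= z2)%R by rewrite ltr0z in z2_gt0; lia.
  by rewrite -(ler_int R).
have Hbb_le : dot b b <= dot a b by move: z1_ge2; rewrite -Hz1 ler_pdivlMr //; lra.
have Haa_le : dot a a <= dot a b by move: z2_ge2; rewrite -Hz2 ler_pdivlMr // Hba; lra.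
have : dot (a - b) (a - b) <= 0 by rewrite !dotBl !dotBr Hba; lra.
by rewrite le_eqVlt ltNge dot_ge0 orbF dot_eq0 subr_eq0 (negbTE Hne).
Qed.

End RootSystem.

Lemma count_lt_subpred (T : eqType) (s : seq T) (p q : pred T) x :
  subpred p q -> x \in s -> q x -> ~~ p x -> (count p s < count q s)%N.
Proof.
move=> Hpq; elim: s => [//|y s IH]; rewrite in_cons => /orP[/eqP<-|Hx] Hq Hp /=.
  by rewrite Hq (negbTE Hp) add0n add1n ltnS sub_count.
by have := IH Hx Hq Hp; case: (p y) (Hpq y) => /= [->|_]; lia.
Qed.

Section Chamber.
Variables (R : realFieldType) (n : nat) (Rs : seq 'rV[R]_n) (c : 'rV[R]_n).
Hypothesis HRs : reduced_root_system Rs.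
Hypothesis Hc : forall a, a \in Rs -> dot a c != 0.
Implicit Types a b d g h : 'rV[R]_n.

Definition pos_root a := a \in Rs /\ 0 < dot a c.

Definition simple_root a :=
  pos_root a /\ ~ exists b d, pos_root b /\ pos_root d /\ a = b + d.

Lemma simple_root_pos a : simple_root a -> pos_root a.
Proof. by case. Qed.

Lemma simple_root_mem a : simple_root a -> a \in Rs.
Proof. by case=> [[]]. Qed.

Lemma root_pos_or_neg a : a \in Rs -> 0 < dot a c \/ dot a c < 0.
Proof. by move/Hc; rewrite neq_lt => /orP[]; [right|left]. Qed.

Lemma pos_root_opp a : a \in Rs -> dot a c < 0 -> pos_root (- a).
Proof. by move=> Ha Hac; split; [exact: root_opp | rewrite dotNl oppr_gt0]. Qed.

Lemma pos_root_ind (P : 'rV[R]_n -> Prop) :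
  (forall a, pos_root a -> (forall b, pos_root b -> dot b c < dot a c -> P b) -> P a) ->
  forall a, pos_root a -> P a.
Proof.
move=> IH.
suff Pk (k : nat) a : (count (fun b => dot b c < dot a c)%R Rs < k)%N -> pos_root a -> P a.
  by move=> a; apply: (Pk _ a (ltnSn _)).
elim: k a => [//|k IHk] a Hk Ha; apply: IH => // b Hb Hba; apply: IHk => //.
rewrite ltnS in Hk; apply: leq_trans Hk; apply: (@count_lt_subpred _ _ _ _ b).
- by move=> x /= Hx; apply: lt_trans Hba.
- by case: Hb.
- by [].
- by rewrite /= ltxx.
Qed.

Lemma simple_root_dot_le0 a b :
  simple_root a -> simple_root b -> a != b -> dot a b <= 0.
Proof.
move=> [[Ha Hac] Hna] [[Hb Hbc] Hnb] Hne; rewrite leNgt; apply/negP => Hab.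
have Hab_root := root_sub HRs Ha Hb Hab Hne.
case: (root_pos_or_neg Hab_root) => Hs.
  by apply: Hna; exists b, (a - b); do !split => //; rewrite addrC subrK.
apply: Hnb; exists a, (b - a); do !split => //.
- by rewrite -opprB (root_opp HRs).
- by rewrite dotBl; move: Hs; rewrite dotBl; lra.
- by rewrite addrC subrK.
Qed.

Definition is_scoord a (k : 'rV[R]_n -> R) :=
  (forall g, ~ simple_root g -> k g = 0) /\ a = \sum_(g <- Rs) k g *: g.

Lemma dot_simple_combs_le0 (p q : 'rV[R]_n -> R) :
  (forall g, ~ simple_root g -> p g = 0) -> (forall g, ~ simple_root g -> q g = 0) ->
  (forall g, 0 <= p g) -> (forall g, 0 <= q g) -> (forall g, p g = 0 \/ q g = 0) ->
  dot (\sum_(g <- Rs) p g *: g) (\sum_(h <- Rs) q h *: h) <= 0.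
Proof.
move=> Zp Zq Pp Pq Hpq; rewrite dot_suml big_seq sumr_le0 // => g _.
rewrite dotZl dot_sumr mulr_sumr big_seq sumr_le0 // => h _.
rewrite dotZr mulrA.
have [->|pg] := eqVneq (p g) 0; first by rewrite !mul0r.
have [->|qh] := eqVneq (q h) 0; first by rewrite mulr0 mul0r.
rewrite mulr_ge0_le0 ?mulr_ge0 // simple_root_dot_le0 //.
- by apply: NNPP => /Zp /eqP; apply/negP.
- by apply: NNPP => /Zq /eqP; apply/negP.
- by apply: contraNneq qh => <-; case: (Hpq g) pg => [->|-> //]; rewrite eqxx.
Qed.

Lemma simple_comb_ge0_eq0 (p : 'rV[R]_n -> R) :
  (forall g, ~ simple_root g -> p g = 0) -> (forall g, 0 <= p g) ->
  \sum_(g <- Rs) p g *: g = 0 -> forall g, p g = 0.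
Proof.
move=> Zp Pp Hsum g; apply: NNPP => pg.
have Hg : simple_root g by apply: NNPP => /Zp.
have : \sum_(h <- Rs) p h * dot h c == 0.
  by rewrite -[X in _ == X](dot0l c) -Hsum dot_suml; apply/eqP/eq_bigr => h _; rewrite dotZl.
rewrite psumr_eq0 => [/allP/(_ g (simple_root_mem Hg))|h _].
  by rewrite mulf_eq0 (negPf (introN eqP pg)) gt_eqF //; case: Hg => [[]].
have [->|ph] := eqVneq (p h) 0; first by rewrite mul0r.
have [[_ /ltW Hhc] _] : simple_root h by apply: NNPP => /Zp /eqP; apply/negP.
exact: mulr_ge0.
Qed.

(* Split [k] into its positive and negative parts; the two resulting
   combinations are equal, and their inner product is both [>= 0] and [<= 0]. *)
Lemma simple_roots_free k : is_scoord 0 k -> forall g, k g = 0.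
Proof.
move=> [Zk Hk].
pose p g := Num.max (k g) 0; pose q g := Num.max (- k g) 0.
have Pp g : 0 <= p g by rewrite le_max lexx orbT.
have Pq g : 0 <= q g by rewrite le_max lexx orbT.
have Zp g : ~ simple_root g -> p g = 0 by move/Zk; rewrite /p => ->; rewrite maxxx.
have Zq g : ~ simple_root g -> q g = 0 by move/Zk; rewrite /q => ->; rewrite oppr0 maxxx.
have Hpq g : p g = 0 /\ q g = - k g \/ q g = 0 /\ p g = k g.
  rewrite /p /q; have [k_ge0|k_lt0] := leP 0 (k g).
    by right; rewrite max_r // oppr_le0.
  by left; rewrite max_l // oppr_ge0 ltW.
have kE g : k g = p g - q g.
  by case: (Hpq g) => -[-> ->]; rewrite ?sub0r ?opprK ?subr0.
set v := \sum_(g <- Rs) p g *: g.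
have vE : v = \sum_(g <- Rs) q g *: g.
  apply/eqP; rewrite -subr_eq0 /v -sumrB; apply/eqP; rewrite [RHS]Hk.
  by apply: eq_bigr => g _; rewrite -scalerBl -kE.
have v0 : v = 0.
  apply/eqP; rewrite -dot_eq0 eq_le dot_ge0 andbT {2}vE.
  by apply: dot_simple_combs_le0 => // g; case: (Hpq g) => -[-> _]; [left|right].
have q0 : \sum_(g <- Rs) q g *: g = 0 by rewrite -vE.
by move=> g; rewrite kE (simple_comb_ge0_eq0 Zp Pp v0) (simple_comb_ge0_eq0 Zq Pq q0) subr0.
Qed.

Lemma is_scoord_simple a : simple_root a -> is_scoord a (fun g => (g == a)%:R).
Proof.
move=> Ha; split=> [g Hg|]; first by case: eqVneq => // E; rewrite E in Hg.
rewrite (bigD1_seq a) ?(simple_root_mem Ha) //=; last by case: HRs.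
by rewrite eqxx scale1r big1 ?addr0 // => g /negbTE ->; rewrite scale0r.
Qed.

Lemma is_scoordD a b k l :
  is_scoord a k -> is_scoord b l -> is_scoord (a + b) (fun g => k g + l g).
Proof.
move=> [Zk ->] [Zl ->]; split=> [g Hg|]; first by rewrite Zk // Zl // addr0.
by rewrite -big_split; apply: eq_bigr => g _; rewrite scalerDl.
Qed.

Lemma is_scoordN a k : is_scoord a k -> is_scoord (- a) (fun g => - k g).
Proof.
move=> [Zk ->]; split=> [g Hg|]; first by rewrite Zk // oppr0.
by rewrite -sumrN; apply: eq_bigr => g _; rewrite scaleNr.
Qed.

Lemma pos_root_scoord_ge0 a :
  pos_root a -> exists2 k, is_scoord a k & forall g, 0 <= k g.
Proof.
elim/pos_root_ind => {}a Ha IH.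
case: (classic (simple_root a)) => [Hs|Hns].
  by exists (fun g => (g == a)%:R) => [|g]; [exact: is_scoord_simple | rewrite ler0n].
have [b [d [Hb [Hd Ea]]]] : exists b d, pos_root b /\ pos_root d /\ a = b + d.
  by apply: NNPP => H; apply: Hns.
have [kb Hkb Pkb] := IH b Hb ltac:(rewrite Ea dotDl; case: Hd => _; lra).
have [kd Hkd Pkd] := IH d Hd ltac:(rewrite Ea dotDl; case: Hb => _; lra).
by exists (fun g => kb g + kd g) => [|g]; [rewrite Ea; exact: is_scoordD | rewrite addr_ge0].
Qed.

Lemma root_is_scoord a : a \in Rs -> exists k, is_scoord a k.
Proof.
move=> Ha; case: (root_pos_or_neg Ha) => Hac.
  by have [k Hk _] := pos_root_scoord_ge0 (conj Ha Hac); exists k.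
have [k Hk _] := pos_root_scoord_ge0 (pos_root_opp Ha Hac).
by exists (fun g => - k g); rewrite -[a]opprK; exact: is_scoordN.
Qed.

Lemma is_scoord_unique a k l : is_scoord a k -> is_scoord a l -> forall g, k g = l g.
Proof.
move=> Hk Hl g; apply/eqP; rewrite -subr_eq0; apply/eqP.
apply: (simple_roots_free (k := fun g => k g - l g)).
by rewrite -(subrr a); apply: is_scoordD => //; apply: is_scoordN.
Qed.

(* Meaningful only for roots (scoordP); otherwise an arbitrary [epsilon] choice. *)
Definition scoord a : 'rV[R]_n -> R := epsilon (inhabits (fun _ => 0)) (is_scoord a).

Lemma scoordP a : a \in Rs -> is_scoord a (scoord a).
Proof. by move=> Ha; apply: epsilon_spec; exact: root_is_scoord. Qed.

Lemma scoordE a k : is_scoord a k -> forall g, scoord a g = k g.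
Proof. by move=> Hk; apply: (is_scoord_unique _ Hk); apply: epsilon_spec; exists k. Qed.

Lemma scoordD a b g : a \in Rs -> b \in Rs -> scoord (a + b) g = scoord a g + scoord b g.
Proof. by move=> Ha Hb; rewrite (scoordE (is_scoordD (scoordP Ha) (scoordP Hb))). Qed.

Lemma scoordN a g : a \in Rs -> scoord (- a) g = - scoord a g.
Proof. by move=> Ha; rewrite (scoordE (is_scoordN (scoordP Ha))). Qed.

Lemma scoord_simple a g : simple_root a -> scoord a g = (g == a)%:R.
Proof. by move=> Ha; rewrite (scoordE (is_scoord_simple Ha)). Qed.

Lemma scoord_ge0 a g : pos_root a -> 0 <= scoord a g.
Proof. by move/pos_root_scoord_ge0 => [k Hk Pk]; rewrite (scoordE Hk). Qed.

Lemma scoord_le0 a g : a \in Rs -> dot a c < 0 -> scoord a g <= 0.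
Proof.
move=> Ha Hac; rewrite -[a]opprK scoordN ?(root_opp HRs) // oppr_le0.
exact/scoord_ge0/pos_root_opp.
Qed.

Lemma scoord_neq0_simple a g : a \in Rs -> scoord a g != 0 -> simple_root g.
Proof.
by move/scoordP => [Z _] Hg; apply: NNPP => /Z /eqP; apply/negP.
Qed.

(* A positive root [r] pairs positively with some simple root [d] of its support,
   and then [r - d] is again a root, necessarily positive. *)
Lemma pos_root_subr_simple r :
  pos_root r -> ~ simple_root r -> exists2 d, simple_root d & pos_root (r - d).
Proof.
move=> Hr Hns; have [Rr _] := Hr; have [_ rE] := scoordP Rr.
have : has (fun g => 0 < scoord r g * dot g r) Rs.
  apply: contraTT (dot_root_gt0 HRs Rr) => /hasPn Hle.
  rewrite -leNgt {1}rE dot_suml big_seq sumr_le0 // => g /Hle.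
  by rewrite dotZl -leNgt.
case/hasP => g Rg Hgr.
have Hcg : scoord r g != 0 by apply: contraTneq Hgr => ->; rewrite mul0r ltxx.
have Hcg_gt0 : 0 < scoord r g by rewrite lt_def Hcg scoord_ge0.
have Hrg : 0 < dot r g by rewrite dotC -(pmulr_rgt0 _ Hcg_gt0).
have Hsg := scoord_neq0_simple Rr Hcg.
have Hne : r != g by apply/eqP => rg; apply: Hns; rewrite rg.
have Rrg := root_sub HRs Rr Rg Hrg Hne.
exists g => //; case: (root_pos_or_neg Rrg) => Hs; first by [].
case: Hsg => _ []; exists r, (g - r); split => //; split; last by rewrite addrC subrK.
by rewrite -opprB; apply: pos_root_opp.
Qed.

Lemma is_scoord_sum (k : 'rV[R]_n -> R) (y : 'rV[R]_n -> 'rV[R]_n)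
    (l : 'rV[R]_n -> 'rV[R]_n -> R) :
  (forall g, g \in Rs -> is_scoord (y g) (l g)) ->
  is_scoord (\sum_(g <- Rs) k g *: y g) (fun h => \sum_(g <- Rs) k g * l g h).
Proof.
move=> Hl; split=> [h Hh|].
  by rewrite big_seq big1 // => g Rg; have [Z _] := Hl g Rg; rewrite Z // mulr0.
under [RHS]eq_bigr do rewrite scaler_suml.
rewrite exchange_big /= big_seq [RHS]big_seq; apply: eq_bigr => g Rg.
have [_ {1}->] := Hl g Rg; rewrite scaler_sumr; apply: eq_bigr => h _.
by rewrite scalerA.
Qed.

Definition QPhi_c (Phi : 'rV[R]_n -> Prop) b := pos_root b \/
  [/\ b \in Rs, dot b c < 0 & forall g, simple_root g -> scoord b g != 0 -> ~ Phi g].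

Lemma QPhi_c_mem Phi b : QPhi_c Phi b -> b \in Rs.
Proof. by case=> [[]|[]]. Qed.

Section ClosedSubset.
Variable Q' : 'rV[R]_n -> Prop.
Hypothesis HQ' : closed_subset Rs Q'.
Hypothesis Q'_pos : forall a, pos_root a -> Q' a.

(* Peel simple roots off [r = - b] one at a time (pos_root_subr_simple);
   closedness carries membership of [- r] down to the simple roots in its support. *)
Lemma closed_opp_supp b g :
  Q' b -> b \in Rs -> dot b c < 0 -> scoord b g != 0 -> Q' (- g).
Proof.
have [_ Q'D] := HQ'.
move=> Qb Rb Hbc Hbg; have Hr := pos_root_opp Rb Hbc.
suff Hind : forall r, pos_root r -> scoord r g != 0 -> Q' (- r) -> Q' (- g).
  by apply: (Hind (- b) Hr); rewrite ?scoordN ?oppr_eq0 ?opprK.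
clear Qb Rb Hbc Hbg Hr; apply: pos_root_ind => r Hr IH Hrg Qr.
case: (classic (simple_root r)) => [Hs|Hns].
  by move: Hrg; rewrite scoord_simple // pnatr_eq0 eqb0 negbK => /eqP ->.
have [d Hd Hrd] := pos_root_subr_simple Hr Hns.
have [[Rd Hdc] _] := Hd; have [Rrd _] := Hrd.
have Qrd : Q' (- (r - d)).
  rewrite opprB addrC; apply: Q'D => //; first exact: Q'_pos.
  by rewrite addrC -opprB (root_opp HRs).
have [Hrdg|Hrdg] := eqVneq (scoord (r - d) g) 0.
  have gd : g = d.
    move: Hrg; rewrite -(subrK d r) scoordD // Hrdg add0r scoord_simple //.
    by rewrite pnatr_eq0 eqb0 negbK => /eqP.
  have -> : - g = - r + (r - g) by rewrite addrA addNr add0r.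
  apply: Q'D => //; first by rewrite gd; exact: Q'_pos.
  by rewrite addrA addNr add0r (root_opp HRs) // gd.
apply: (IH (r - d)) => //.
by rewrite dotBl; lra.
Qed.

Lemma closed_of_opp_supp b : b \in Rs -> dot b c < 0 ->
  (forall g, simple_root g -> scoord b g != 0 -> Q' (- g)) -> Q' b.
Proof.
have [_ Q'D] := HQ'.
move=> Rb Hbc Hsupp; have Hr := pos_root_opp Rb Hbc; rewrite -[b]opprK.
suff Hind : forall r, pos_root r ->
    (forall g, simple_root g -> scoord r g != 0 -> Q' (- g)) -> Q' (- r).
  by apply: (Hind (- b) Hr) => g Hg; rewrite scoordN // oppr_eq0; exact: Hsupp.
clear Rb Hbc Hsupp Hr; apply: pos_root_ind => r Hr IH Hsupp.
case: (classic (simple_root r)) => [Hs|Hns].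
  by apply: Hsupp; rewrite // scoord_simple // eqxx oner_eq0.
have [d Hd Hrd] := pos_root_subr_simple Hr Hns.
have [[Rd Hdc] _] := Hd; have [Rrd _] := Hrd.
have rE h : scoord r h = scoord (r - d) h + scoord d h by rewrite -scoordD ?subrK.
have Qrd : Q' (- (r - d)).
  apply: (IH (r - d)) => //; first by rewrite dotBl; lra.
  move=> g Hg Hrdg; apply: Hsupp => //; rewrite rE gt_eqF //.
  by rewrite ltr_pwDl ?scoord_ge0 ?simple_root_pos // lt_def Hrdg scoord_ge0.
have Qd : Q' (- d).
  apply: Hsupp => //; rewrite rE [scoord d d]scoord_simple // eqxx gt_eqF //.
  by rewrite ltr_wpDl ?scoord_ge0.
rewrite -[r](subrK d) opprD; apply: Q'D => //.
by rewrite -opprD subrK (root_opp HRs) //; case: Hr.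
Qed.
End ClosedSubset.
End Chamber.

Section Involution.
Variables (R : realFieldType) (n : nat) (Rs : seq 'rV[R]_n) (c : 'rV[R]_n).
Variables (Q : 'rV[R]_n -> Prop) (S : 'M[R]_n).
Hypothesis HRs : reduced_root_system Rs.
Hypothesis Hc : forall a, a \in Rs -> dot a c != 0.
Hypothesis HQ : closed_subset Rs Q.
Hypothesis Q_pos : forall a, pos_root Rs c a -> Q a.
Hypothesis actK : forall x, act S (act S x) = x.
Hypothesis act_root : forall a, a \in Rs -> act S a \in Rs.
Hypothesis act_fit : forall a, simple_root Rs c a -> Q (- a) ->
  act S a != a -> act S a != - a -> dot (act S a) c < 0.
Implicit Types a b d e g h : 'rV[R]_n.
Local Notation pos_root := (pos_root Rs c).
Local Notation simple_root := (simple_root Rs c).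
Local Notation scoord := (scoord Rs c).

(* [Phi_C = B(C) \cap Q^n]; simple roots already lie in [Q] by admissibility. *)
Definition phi g := simple_root g /\ ~ Q (- g).
Definition phi_sp g := phi g /\ pos_root (act S g).
Local Notation QPhi_sp := (QPhi_c Rs c phi_sp).

Lemma Q_root a : Q a -> a \in Rs.
Proof. by case: HQ => + _; apply. Qed.

Lemma act_opp x : act S (- x) = - act S x.
Proof. exact: mulNmx. Qed.

Lemma scoord_act b e : b \in Rs ->
  scoord (act S b) e = \sum_(g <- Rs) scoord b g * scoord (act S g) e.
Proof.
move=> Rb; have [_ bE] := scoordP HRs Hc Rb.
have -> : act S b = \sum_(g <- Rs) scoord b g *: act S g.
  by rewrite {1}bE /act mulmx_suml; apply: eq_bigr => g _; rewrite scalemxAl.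
have Hsum := is_scoord_sum (scoord b) (fun g Rg => scoordP HRs Hc (act_root Rg)).
by rewrite (scoordE HRs Hc Hsum).
Qed.

(* [g] is in [Q^r]; if [s g] is complex it is negative by fitness, and otherwise
   [s g = +-g] has no coordinate on [e != g]. *)
Lemma scoord_act_simple_le0 g e :
  simple_root g -> Q (- g) -> ~ Q (- e) -> scoord (act S g) e <= 0.
Proof.
move=> Hg Qg Qe; have Rg := simple_root_mem Hg.
have eg : e != g by apply/eqP => eg; apply: Qe; rewrite eg.
have [->|Sg_neq] := eqVneq (act S g) g.
  by rewrite scoord_simple // (negbTE eg).
have [->|Sg_neqN] := eqVneq (act S g) (- g).
  by rewrite scoordN // scoord_simple // (negbTE eg) oppr0.
by apply: scoord_le0 => //; [exact: act_root | exact: act_fit].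
Qed.

Lemma scoord_act_not_phi_sp_le0 g e :
  simple_root g -> ~ phi_sp g -> ~ Q (- e) -> scoord (act S g) e <= 0.
Proof.
move=> Hg Hsp Qe; case: (classic (Q (- g))) => Qg.
  exact: scoord_act_simple_le0.
have RSg := act_root (simple_root_mem Hg).
case: (root_pos_or_neg Hc RSg) => HSg; last exact: scoord_le0.
by case: Hsp; split.
Qed.

(* Expand [g = s (s g)] in simple coordinates: every simple root [h] in the
   support of [s g] lies in [Q^r] (closedness of [Q] around [- s g]), so each
   term [scoord (s g) h * scoord (s h) g] is [<= 0], whereas the sum is [1]. *)
Lemma act_phi_pos_Qn g : phi g -> pos_root (act S g) -> ~ Q (- act S g).
Proof.
move=> [Hg Qg] HSg QSg; have Rg := simple_root_mem Hg; have RSg := act_root Rg.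
suff : scoord (act S (act S g)) g <= 0 by rewrite actK scoord_simple // eqxx ler10.
rewrite scoord_act // big_seq sumr_le0 // => h Rh.
have [->|Hh] := eqVneq (scoord (act S g) h) 0; first by rewrite mul0r.
have Hsh := scoord_neq0_simple HRs Hc RSg Hh.
have Qh : Q (- h).
  apply: (closed_opp_supp HRs Hc HQ Q_pos QSg (root_opp HRs RSg)).
    by rewrite dotNl oppr_lt0; case: HSg.
  by rewrite scoordN // oppr_eq0.
by rewrite mulr_ge0_le0 ?scoord_ge0 // scoord_act_simple_le0.
Qed.

Lemma QPhi_sp_scoord_ge0 a g : QPhi_sp a -> phi_sp g -> 0 <= scoord a g.
Proof.
case=> [Ha|[_ _ Hsupp]] Hg; first exact: scoord_ge0.
have [->|Hag] := eqVneq (scoord a g) 0; first by [].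
by case: (Hsupp g _ Hag Hg); case: Hg => [[]].
Qed.

Lemma QPhi_sp_closed : closed_subset Rs QPhi_sp.
Proof.
split=> [a|a b Ha Hb Rab]; first exact: QPhi_c_mem.
have Ra := QPhi_c_mem Ha; have Rb := QPhi_c_mem Hb.
case: (root_pos_or_neg Hc Rab) => Hs; first by left.
right; split=> // g Hg; rewrite scoordD // => Hab Hsp; move: Hab.
apply/negP/negPn; rewrite eq_le addr_ge0 ?QPhi_sp_scoord_ge0 // andbT.
by rewrite -scoordD // scoord_le0.
Qed.

Lemma QPhi_sp_parabolic : parabolic Rs QPhi_sp.
Proof.
split=> [|a Ra]; first exact: QPhi_sp_closed.
case: (root_pos_or_neg Hc Ra) => Hs; first by left; left.
by right; left; exact: pos_root_opp.
Qed.

Lemma Q_sub_QPhi_sp a : Q a -> QPhi_sp a.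
Proof.
move=> Qa; have Ra := Q_root Qa.
case: (root_pos_or_neg Hc Ra) => Hs; first by left.
right; split=> // g Hg Hag [[_ Qg] _]; apply: Qg.
exact: (closed_opp_supp HRs Hc HQ Q_pos Qa).
Qed.

Lemma QPhi_sp_sub_QsQ a : QPhi_sp a -> Q a \/ img S Q a.
Proof.
case=> [Ha|[Ra Hac Hsupp]]; first by left; exact: Q_pos.
right; exists (act S a); split; last by rewrite actK.
have RSa := act_root Ra.
case: (root_pos_or_neg Hc RSa) => HSa; first exact: Q_pos.
apply: (closed_of_opp_supp HRs Hc HQ RSa HSa) => e He HSae.
apply: NNPP => Qe; move: HSae; apply/negP/negPn.
rewrite eq_le scoord_le0 //= scoord_act // big_seq sumr_ge0 // => g Rg.
have [->|Hag] := eqVneq (scoord a g) 0; first by rewrite mul0r.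
have Hg := scoord_neq0_simple HRs Hc Ra Hag.
apply: mulr_le0; first exact: scoord_le0.
by apply: scoord_act_not_phi_sp_le0 => //; exact: Hsupp.
Qed.

Lemma QPhi_sp_max Q' : closed_subset Rs Q' -> (forall a, Q a -> Q' a) ->
  (forall a, Q' a -> Q a \/ img S Q a) -> forall a, Q' a -> QPhi_sp a.
Proof.
move=> HQ' QQ' Q'QsQ a Q'a; have Ra := proj1 HQ' a Q'a.
case: (root_pos_or_neg Hc Ra) => Hs; first by left.
right; split=> // g Hg Hag [[_ Qg] HSg].
have Q'g : Q' (- g).
  by apply: (closed_opp_supp HRs Hc HQ' _ Q'a) => // b Hb; exact/QQ'/Q_pos.
case: (Q'QsQ _ Q'g) => [//|[b [Qb bE]]].
by apply: (act_phi_pos_Qn (conj Hg Qg) HSg); rewrite -act_opp bE actK.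
Qed.

Lemma opp_phi_QPhi_sp g : phi g -> ~ pos_root (act S g) -> QPhi_sp (- g).
Proof.
move=> [Hg Qg] HSg; have Rg := simple_root_mem Hg.
right; split; first exact: root_opp.
  by rewrite dotNl oppr_lt0; case: Hg => [[]].
move=> h Hh; rewrite scoordN // scoord_simple // oppr_eq0 pnatr_eq0 eqb0 negbK.
by move=> /eqP -> [].
Qed.

Lemma QPhi_sp_sub_Q : (forall g, phi g -> pos_root (act S g)) ->
  forall a, QPhi_sp a -> Q a.
Proof.
move=> Hpos a [Ha|[Ra Hac Hsupp]]; first exact: Q_pos.
apply: (closed_of_opp_supp HRs Hc HQ Ra Hac) => g Hg Hag.
by apply: NNPP => Qg; apply: (Hsupp g Hg Hag); split; [|apply: Hpos]; split.
Qed.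

Lemma act_phi_pos_iff_Qn : (forall g, phi g -> pos_root (act S g)) <->
  (forall g, phi g -> Qn Q (act S g)).
Proof.
split=> Hpos g Hg.
  by split; [exact/Q_pos/Hpos | exact: act_phi_pos_Qn (Hpos g Hg)].
have [QSg NQSg] := Hpos g Hg; have RSg := Q_root QSg.
case: (root_pos_or_neg Hc RSg) => HSg; first by [].
by case: NQSg; exact/Q_pos/pos_root_opp.
Qed.

Lemma levi_nondegenerateP :
  levi_nondegenerate Rs Q S <-> forall g, phi g -> pos_root (act S g).
Proof.
split=> [Hnd g Hg|Hpos].
  apply: NNPP => HSg; apply: Hnd; exists QPhi_sp; split.
  - exact: QPhi_sp_parabolic.
  - exact: Q_sub_QPhi_sp.
  - by exists (- g); split; [exact: opp_phi_QPhi_sp | case: Hg].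
  - exact: QPhi_sp_sub_QsQ.
move=> [Q' [[HQ' _] QQ' [a [Q'a NQa]] Q'QsQ]]; apply: NQa.
exact/(QPhi_sp_sub_Q Hpos)/(QPhi_sp_max HQ' QQ' Q'QsQ).
Qed.
End Involution.

Lemma pred_ext (T : Type) (P P' : T -> Prop) : (forall x, P x <-> P' x) -> P = P'.
Proof.
by move=> PP'; apply: functional_extensionality => x; apply: propositional_extensionality.
Qed.

Section WeylChamber.
Variables (R : realFieldType) (n : nat) (Rs : seq 'rV[R]_n) (c : 'rV[R]_n).
Variable C : 'rV[R]_n -> Prop.
Hypothesis HRs : reduced_root_system Rs.
Hypothesis Hc : forall a, a \in Rs -> dot a c != 0.
Hypothesis HC : forall x, C x <->
  (forall a, a \in Rs -> dot a x != 0 /\ ((0 < dot a x) = (0 < dot a c))).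
Implicit Types a b : 'rV[R]_n.
Local Notation pos_root := (pos_root Rs c).
Local Notation simple_root := (simple_root Rs c).

Lemma chamber_c : C c.
Proof. by apply/HC => a Ra; split => //; apply: Hc. Qed.

Lemma pos_rootsE : pos_roots Rs C = pos_root.
Proof.
apply: pred_ext => a; split=> [[Ra Ha]|[Ra Hac]]; first by split=> //; exact/Ha/chamber_c.
by split=> // x /HC/(_ a Ra) [_ ->].
Qed.

Lemma neg_rootsE : neg_roots Rs C = fun a => a \in Rs /\ dot a c < 0.
Proof.
apply: pred_ext => a; split=> [[Ra Ha]|[Ra Hac]]; first by split=> //; exact/Ha/chamber_c.
split=> // x /HC/(_ a Ra) [Hax]; rewrite (lt_gtF Hac).
by move: Hax; rewrite neq_lt => /orP[//|->].
Qed.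

Lemma simple_rootsE : simple_roots Rs C = simple_root.
Proof. by apply: pred_ext => a; rewrite /simple_roots pos_rootsE. Qed.

Lemma suppE a : a \in Rs ->
  supp Rs C a = fun b => simple_root b /\ scoord Rs c a b != 0.
Proof.
move=> Ra; apply: pred_ext => b; rewrite /supp simple_rootsE.
split=> [[Hb [k [Zk [aE kb]]]]|[Hb Hab]].
  by split; rewrite // (scoordE HRs Hc (k := k)).
by split=> //; exists (scoord Rs c a); have [Z aE] := scoordP HRs Hc Ra.
Qed.

Lemma QPhiE Phi : QPhi Rs C Phi = QPhi_c Rs c Phi.
Proof.
apply: pred_ext => b; rewrite /QPhi pos_rootsE neg_rootsE.
split=> [[|[[Rb Hbc] Hsupp]]|[|[Rb Hbc Hsupp]]]; try by left.
  by right; split=> // g Hg Hbg; apply: Hsupp; rewrite suppE.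
by right; split=> // g; rewrite suppE // => -[]; exact: Hsupp.
Qed.

Lemma PhiCE Q : (forall a, pos_root a -> Q a) -> PhiC Rs Q C = phi Rs c Q.
Proof.
move=> Q_pos; apply: pred_ext => a; rewrite /PhiC /Qn simple_rootsE.
split=> [[Ha [_ NQa]]|[Ha NQa]]; first by split.
by split=> //; split=> //; exact/Q_pos/simple_root_pos.
Qed.

Lemma V_fit_act_simple Q S : V_fit Rs Q S C ->
  forall a, simple_root a -> Q (- a) -> act S a != a -> act S a != - a ->
  dot (act S a) c < 0.
Proof.
move=> [_ Hfit] a Ha Qa /eqP Sa /eqP SaN.
have : neg_roots Rs C (act S a).
  apply: Hfit; first by rewrite simple_rootsE.
    by move=> [_ [_ /(_ Qa)]].
  by rewrite /complex_root; split; [exact: (simple_root_mem Ha) | split].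
by case=> _ /(_ c chamber_c).
Qed.
End WeylChamber.

Theorem theorem4p30 (R : realFieldType) (n : nat) (Rs : seq 'rV[R]_n)
    (Q : 'rV[R]_n -> Prop) (S : 'M[R]_n) (C : 'rV[R]_n -> Prop) :
  reduced_root_system Rs -> parabolic Rs Q -> root_involution Rs S ->
  weyl_chamber Rs C -> V_fit Rs Q S C ->
  let Phi := PhiC Rs Q C in
  let Phi_sp := fun a => Phi a /\ pos_roots Rs C (act S a) in
  let QsQ := fun a => Q a \/ img S Q a in
  ((closed_subset Rs (QPhi Rs C Phi_sp) /\ subsetV Q (QPhi Rs C Phi_sp) /\
    subsetV (QPhi Rs C Phi_sp) QsQ) /\
   (forall Q' : 'rV[R]_n -> Prop, closed_subset Rs Q' -> subsetV Q Q' ->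
      subsetV Q' QsQ -> subsetV Q' (QPhi Rs C Phi_sp))) /\
  (levi_nondegenerate Rs Q S <-> (forall a, Phi a -> pos_roots Rs C (act S a))) /\
  ((forall a, Phi a -> pos_roots Rs C (act S a)) <->
   (forall a, Phi a -> Qn Q (act S a))).
Proof.
move=> HRs [HQ _] [SS _ act_root _] [c [Hc HC]] Hfit /=.
have Q_pos : forall a, pos_root Rs c a -> Q a.
  by case: Hfit; rewrite /admissible (pos_rootsE Hc HC).
have actK x : act S (act S x) = x by rewrite /act -mulmxA SS mulmx1.
have act_fit := V_fit_act_simple Hc HC Hfit.
rewrite (PhiCE Hc HC Q_pos) (pos_rootsE Hc HC) (QPhiE HRs Hc HC).
split; [split; [split; [|split]|] | split].
- by apply: QPhi_sp_closed.
- by apply: Q_sub_QPhi_sp.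
- by apply: QPhi_sp_sub_QsQ.
- by apply: QPhi_sp_max.
- by apply: levi_nondegenerateP.
- by apply: act_phi_pos_iff_Qn.
Qed.
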